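(* Let $E$ be a functional defined on all $n$-qubit pure states, for all natural numbers $n$. Suppose (i) $E$ is a type I entanglement monotone, and (ii) $E(|\psi\rangle|0\rangle)=E(|\psi\rangle)$ for every multi-qubit state $|\psi\rangle$. Then $E$ is a type II entanglement monotone.
   Context: A type I entanglement monotone is a functional $M$ such that, for every $n$ and every LOCC protocol (each qubit a separate party) applied to an $n$-qubit state $|\psi\rangle$ yielding $n$-qubit output states $|\psi_i\rangle$ with probabilities $p_i$, one has $M(|\psi\rangle)\ge\sum_i p_iM(|\psi_i\rangle)$. For an $N$-qubit $|\psi\rangle$ and an $n$-qubit $|\phi\rangle$, $n\le N$, write $|\psi\rangle\geq_{\mathrm{LOCC}}|\phi\rangle$ if for some set $A$ of $n$ qubits the transformation $|\psi\rangle\to|\phi\rangle^{A}|0\rangle^{\bar A}$ is achievable exactly and with probability one by LOCC. A type II entanglement monotone is a functional $E$ on all $n$-qubit states, all $n$, with $E(|\psi\rangle)\ge E(|\psi'\rangle)$ whenever $|\psi\rangle\geq_{\mathrm{LOCC}}|\psi'\rangle$. *)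

(* Complex numbers are  R[i]  (mathcomp-real-closed) over an
   arbitrary real closed field R (this includes the real numbers). *)
From HB Require Import structures.
From mathcomp Require Import all_boot all_order all_algebra.
From mathcomp Require Import complex.
Set Implicit Arguments. Unset Strict Implicit. Unset Printing Implicit Defensive.
Import Order.TTheory GRing.Theory Num.Theory.
Local Open Scope ring_scope.

Notation basis N := {ffun 'I_N -> bool}.

(* (unnormalised) vectors of the N-qubit Hilbert space C^(2^N), C = R[i] *)
Notation qstate R N := {ffun {ffun 'I_N -> bool} -> R[i]}.

Section Qubits.
Variable R : rcfType.
Local Notation C := R[i].
Local Notation qstate N := (qstate R N).

(* squared norm <v|v> (a nonnegative real, stored in C) *)
Definition sqnorm N (v : qstate N) : C := \sum_(x : basis N) `|v x| ^+ 2.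

Definition normalize N (v : qstate N) : qstate N :=
  [ffun x : basis N => v x / sqrtC (sqnorm v)].

(* a single-qubit operator, as its matrix  K a b = <a|K|b> *)
Definition qop := bool -> bool -> C.

Definition setbit N (x : basis N) (j : 'I_N) (b : bool) : basis N :=
  [ffun i => if i == j then b else x i].

Definition apply1 N (K : qop) (j : 'I_N) (v : qstate N) : qstate N :=
  [ffun x : basis N => \sum_(b : bool) K (x j) b * v (setbit x j b)].

Definition kraus_complete k (K : 'I_k -> qop) : Prop :=
  forall a b : bool,
    \sum_(m < k) \sum_(c : bool) (K m c a)^* * K m c b = (a == b)%:R.

(* finite-round LOCC protocols, each qubit being a separate party:
   at each node one party j performs a local measurement with Kraus
   operators K_0..K_{k-1} on its qubit; the outcome is broadcast and the
   rest of the protocol may depend on it. *)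
Inductive protocol (N : nat) : Type :=
| Stop
| Measure (j : 'I_N) (k : nat) (K : 'I_k -> qop) (next : 'I_k -> protocol N).

Fixpoint valid N (p : protocol N) : Prop :=
  match p with
  | Stop => True
  | Measure j k K next => kraus_complete K /\ forall m, valid (next m)
  end.

(* the unnormalised output branches: branch v occurs with probability
   <v|v> and leaves the state v/||v|| *)
Fixpoint run N (p : protocol N) (v : qstate N) : seq (qstate N) :=
  match p with
  | Stop => [:: v]
  | Measure j k K next =>
      flatten [seq run (next m) (apply1 (K m) j v) | m <- enum 'I_k]
  end.

Definition typeI (E : forall n, qstate n -> R) : Prop :=
  forall n (p : protocol n) (psi : qstate n),
    valid p -> sqnorm psi = 1 ->
    (\sum_(v <- run p psi | sqnorm v != 0) complex.Re (sqnorm v) * E n (normalize v) : R)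
      <= E n psi.

(* |phi>^A |0>^(complement A), where A is the image of the strictly
   increasing map f (qubit k of phi sits at position f k) *)
Definition embed n N (f : 'I_n -> 'I_N) (phi : qstate n) : qstate N :=
  [ffun x : basis N => if [forall i, (i \notin codom f) ==> ~~ x i]
             then phi [ffun k => x (f k)] else 0].

(* psi >=_LOCC phi : exact, probability-one LOCC conversion of psi into
   |phi>^A|0>^(not A) (every branch equals the target up to a scalar,
   i.e. the output state is the target up to a global phase) *)
Definition LOCC_ge N n (psi : qstate N) (phi : qstate n) : Prop :=
  (n <= N)%N /\
  exists f : 'I_n -> 'I_N, (forall i j : 'I_n, (i < j)%N -> (f i < f j)%N) /\
  exists p : protocol N, valid p /\
    forall v, v \in run p psi -> exists c : C, forall x, v x = c * embed f phi x.

Definition typeII (E : forall n, qstate n -> R) : Prop :=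
  forall N n (psi : qstate N) (phi : qstate n),
    sqnorm psi = 1 -> sqnorm phi = 1 -> LOCC_ge psi phi -> E n phi <= E N psi.

Definition insert0 n (j : 'I_n.+1) (psi : qstate n) : qstate n.+1 :=
  [ffun x : basis n.+1 => if x j then 0 else psi [ffun k => x (lift j k)]].

Definition zero_invariant (E : forall n, qstate n -> R) : Prop :=
  forall n (j : 'I_n.+1) (psi : qstate n),
    sqnorm psi = 1 -> E n.+1 (insert0 j psi) = E n psi.

End Qubits.

(* A probability-one conversion psi -> |phi>|0...0> leaves in every branch the
   target state up to a scalar. The squared norms of the branches sum to 1
   (completeness of the Kraus operators), and a type I monotone is invariant
   under a global phase (a phase is a local unitary, which is invertible and
   hence cannot decrease E either), so type I monotonicity reads
   E(psi) >= sum_v p_v E(|phi>|0...0>) = E(|phi>|0...0>). Inserting the |0>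
   qubits one at a time, E(|phi>|0...0>) = E(phi) by hypothesis (ii). *)
From HB Require Import structures.
From mathcomp Require Import all_boot all_order all_algebra.
From mathcomp Require Import complex.
From mathcomp Require Import ring zify.
Set Implicit Arguments. Unset Strict Implicit. Unset Printing Implicit Defensive.
Import Order.TTheory GRing.Theory Num.Theory.
Local Open Scope ring_scope.

Lemma Re_sum (R : rcfType) (T : Type) (s : seq T) (F : T -> R[i]) :
  complex.Re (\sum_(v <- s) F v) = \sum_(v <- s) complex.Re (F v).
Proof. exact: (raddf_sum (@complex.Re R : Rcomplex R -> R)). Qed.

Section Qubits.
Variable R : rcfType.
Local Notation C := R[i].
Local Notation qstate N := (qstate R N).

Lemma setbit_id N (x : basis N) j : setbit x j (x j) = x.
Proof. by apply/ffunP=> i; rewrite ffunE; case: eqP => // ->. Qed.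

Lemma setbit_eq N (x : basis N) j b : setbit x j b j = b.
Proof. by rewrite ffunE eqxx. Qed.

Lemma setbitK N (x : basis N) j b c : setbit (setbit x j c) j b = setbit x j b.
Proof. by apply/ffunP=> i; rewrite !ffunE; case: eqP. Qed.

Lemma big_basis_setbit N (j : 'I_N) (G : basis N -> C) :
  \sum_x G x = \sum_(x : basis N | ~~ x j) \sum_(b : bool) G (setbit x j b).
Proof.
rewrite (bigID (fun x : basis N => x j)) /= addrC.
under [RHS]eq_bigr do rewrite big_bool.
rewrite big_split /= addrC; congr (_ + _); last first.
  by apply: eq_bigr => x /negbTE xj; rewrite -{1}xj setbit_id.
pose flip (x : basis N) := setbit x j (~~ x j).
have flipK : involutive flip.
  by move=> x; rewrite /flip setbitK setbit_eq negbK setbit_id.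
rewrite (reindex_inj (inv_inj flipK)) /=.
by apply: eq_big => x; rewrite /flip setbit_eq // => /negbTE ->.
Qed.

Lemma kraus_complete_norm k (K : 'I_k -> qop R) (a : bool -> C) :
  kraus_complete K ->
  \sum_(m < k) \sum_(c : bool) `|\sum_(b : bool) K m c b * a b| ^+ 2
  = \sum_(b : bool) `|a b| ^+ 2.
Proof.
move=> HK.
have expand m c : `|\sum_(b : bool) K m c b * a b| ^+ 2 =
    \sum_(b : bool) \sum_(b' : bool) (a b * (a b')^*) * ((K m c b')^* * K m c b).
  rewrite normCK rmorph_sum mulr_suml; apply: eq_bigr => b _.
  by rewrite mulr_sumr; apply: eq_bigr => b' _; rewrite rmorphM; ring.
under eq_bigr do under eq_bigr do rewrite expand.
under eq_bigr do rewrite exchange_big.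
under eq_bigr do under eq_bigr do rewrite exchange_big.
rewrite exchange_big; under eq_bigr do rewrite exchange_big.
have complete b b' : \sum_(m < k) \sum_(c : bool) (a b * (a b')^*) * ((K m c b')^* * K m c b)
    = (a b * (a b')^*) * (b' == b)%:R.
  by rewrite -HK mulr_sumr; apply: eq_bigr => m _; rewrite mulr_sumr.
under eq_bigr do under eq_bigr do rewrite complete.
apply: eq_bigr => b _; rewrite normCK big_bool.
by case: b => /=; rewrite mulr1 mulr0 ?addr0 ?add0r.
Qed.

Lemma sqnorm_apply1_sum N k (K : 'I_k -> qop R) (j : 'I_N) (v : qstate N) :
  kraus_complete K -> \sum_(m < k) sqnorm (apply1 (K m) j v) = sqnorm v.
Proof.
move=> HK; rewrite /sqnorm; under eq_bigr do rewrite (big_basis_setbit j).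
rewrite exchange_big (big_basis_setbit j); apply: eq_bigr => x _.
rewrite -(kraus_complete_norm (fun b => v (setbit x j b)) HK).
apply: eq_bigr => m _; apply: eq_bigr => c _.
rewrite ffunE setbit_eq; congr (`|_| ^+ 2); apply: eq_bigr => b _.
by rewrite setbitK.
Qed.

Lemma run_sqnorm N (p : protocol R N) (v : qstate N) :
  valid p -> \sum_(w <- run p v) sqnorm w = sqnorm v.
Proof.
elim: p v => [|j k K next IH] v /=; first by rewrite big_seq1.
case=> HK Hnext; rewrite big_flatten /= big_map big_enum /=.
by rewrite -(sqnorm_apply1_sum j v HK); apply: eq_bigr => m _; apply: IH.
Qed.

Definition scalev N (c : C) (v : qstate N) : qstate N := [ffun x => c * v x].

Lemma sqnorm_scalev N (c : C) (v : qstate N) : sqnorm (scalev c v) = `|c| ^+ 2 * sqnorm v.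
Proof.
by rewrite /sqnorm mulr_sumr; apply: eq_bigr => x _; rewrite ffunE normrM exprMn.
Qed.

Lemma sqnorm_scalev_unit N (c : C) (v : qstate N) :
  `|c| = 1 -> sqnorm v = 1 -> sqnorm (scalev c v) = 1.
Proof. by move=> hc hv; rewrite sqnorm_scalev hc hv expr1n mulr1. Qed.

Lemma normalize_id N (v : qstate N) : sqnorm v = 1 -> normalize v = v.
Proof. by move=> hv; apply/ffunP => x; rewrite ffunE hv sqrtC1 divr1. Qed.

Lemma normalize_scalev N (c : C) (v : qstate N) : sqnorm v = 1 -> c != 0 ->
  normalize (scalev c v) = scalev (c / `|c|) v.
Proof.
move=> hv c0; apply/ffunP => x.
by rewrite !ffunE sqnorm_scalev hv mulr1 sqrCK ?normr_ge0 // mulrAC.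
Qed.

Definition phase_op (u : C) : qop R := fun a b => u * (a == b)%:R.

Lemma phase_op_complete (u : C) : `|u| = 1 -> kraus_complete (fun _ : 'I_1 => phase_op u).
Proof.
move=> hu a b; rewrite big_ord1 big_bool /phase_op !rmorphM !rmorph_nat.
have uu : u^* * u = 1 by rewrite -normCKC hu expr1n.
by case: a; case: b; rewrite /= ?mulr0 ?mul0r ?addr0 ?add0r ?mulr1 ?uu.
Qed.

Lemma apply1_phase_op N (u : C) (j : 'I_N) (v : qstate N) :
  apply1 (phase_op u) j v = scalev u v.
Proof.
apply/ffunP => x; rewrite !ffunE (bigD1 (x j)) //= setbit_id /phase_op eqxx mulr1.
by rewrite big1 ?addr0 // => b /negbTE hb; rewrite eq_sym hb mulr0 mul0r.
Qed.

Lemma sqnorm_insert0 n (j : 'I_n.+1) (w : qstate n) : sqnorm (insert0 j w) = sqnorm w.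
Proof.
rewrite /sqnorm (bigID (fun x : basis n.+1 => x j)) /=.
rewrite big1 ?add0r => [|x xj]; last by rewrite ffunE xj normr0 expr0n.
pose extend (y : basis n) : basis n.+1 :=
  [ffun i => if unlift j i is Some k then y k else false].
rewrite (reindex_onto extend (fun x : basis n.+1 => [ffun k => x (lift j k)])) /=;
  last first.
  move=> x /negbTE xj; apply/ffunP => i; rewrite !ffunE.
  by case: unliftP => [k ->|->]; rewrite ?ffunE.
have extendK y : [ffun k => extend y (lift j k)] = y.
  by apply/ffunP => k; rewrite !ffunE liftK.
have extend_j y : extend y j = false by rewrite ffunE unlift_none.
apply: eq_big => y; first by rewrite extend_j extendK eqxx.
by move=> _; rewrite ffunE extend_j extendK.
Qed.

Lemma insert0_scalev n (j : 'I_n.+1) (c : C) (w : qstate n) :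
  insert0 j (scalev c w) = scalev c (insert0 j w).
Proof. by apply/ffunP => x; rewrite !ffunE; case: (x j); rewrite ?mulr0 ?ffunE. Qed.

Lemma homo_ltn_ord_ge n N (f : 'I_n -> 'I_N) :
  {homo f : i j / (i < j)%N} -> forall i : 'I_n, (i <= f i)%N.
Proof.
move=> hf; suff ge k (hk : (k < n)%N) : (k <= f (Ordinal hk))%N by case=> k hk; apply: ge.
elim: k hk => [|k IH] hk //.
exact: leq_ltn_trans (IH (ltnW hk)) (hf (Ordinal (ltnW hk)) (Ordinal hk) (ltnSn k)).
Qed.

(* Reversing both the domain and codomain of [f] gives the opposite bound. *)
Lemma homo_ltn_ord_id n (f : 'I_n -> 'I_n) : {homo f : i j / (i < j)%N} -> f =1 id.
Proof.
move=> hf i; apply: val_inj => /=.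
pose g i := rev_ord (f (rev_ord i)).
have hg : {homo g : i j / (i < j)%N}.
  move=> a b ab; have /hf : (rev_ord b < rev_ord a)%N by have := ltn_ord b; rewrite /=; lia.
  by have := ltn_ord (f (rev_ord a)); rewrite /g /=; lia.
have := homo_ltn_ord_ge hg (rev_ord i); rewrite /g rev_ordK /=.
have := homo_ltn_ord_ge hf i; have := ltn_ord i; have := ltn_ord (f i); lia.
Qed.

Lemma embed_id n (f : 'I_n -> 'I_n) (phi : qstate n) :
  {homo f : i j / (i < j)%N} -> embed f phi = phi.
Proof.
move=> /homo_ltn_ord_id hf; apply/ffunP => x; rewrite ffunE.
have -> : [forall i, (i \notin codom f) ==> ~~ x i].
  by apply/forallP => i; rewrite -{1}(hf i) codom_f.
by congr (phi _); apply/ffunP => k; rewrite ffunE hf.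
Qed.

Lemma exists_notin_codom n N (f : 'I_n -> 'I_N) :
  (n < N)%N -> exists j, j \notin codom f.
Proof.
move=> nN; have /subsetPn[j _ hj] : ~~ ('I_N \subset codom f); last by exists j.
apply: contraL nN => /subset_leq_card; rewrite card_ord -leqNgt => Nf.
by rewrite (leq_trans Nf) // (leq_trans (card_size _)) // size_codom card_ord.
Qed.

Lemma homo_ltn_factor_lift n M (f : 'I_n -> 'I_M.+1) (j : 'I_M.+1) :
  {homo f : i k / (i < k)%N} -> j \notin codom f ->
  exists2 f' : 'I_n -> 'I_M, {homo f' : i k / (i < k)%N} & forall i, f i = lift j (f' i).
Proof.
move=> hf hj.
have /fin_all_exists[f' hf'] i : exists k, f i = lift j k.
  by case: (unliftP j (f i)) (codom_f f i) => [k ->|->]; [exists k | rewrite (negbTE hj)].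
by exists f' => // a b /hf; rewrite !hf' /= !ltnNge leq_bump2.
Qed.

Lemma embed_lift M n (f : 'I_n -> 'I_M.+1) (f' : 'I_n -> 'I_M) (j : 'I_M.+1)
    (phi : qstate n) :
  j \notin codom f -> (forall i, f i = lift j (f' i)) ->
  embed f phi = insert0 j (embed f' phi).
Proof.
move=> hj hf'.
have codom_lift k : (lift j k \in codom f) = (k \in codom f').
  apply/codomP/codomP => [[i e]|[i ->]]; exists i; last by rewrite hf'.
  by apply: (@lift_inj _ j); rewrite -hf'.
apply/ffunP => x; rewrite !ffunE.
have -> : [ffun k => x (f k)] = [ffun k => [ffun k0 => x (lift j k0)] (f' k)].
  by apply/ffunP => k; rewrite !ffunE hf'.
have -> : [forall i, (i \notin codom f) ==> ~~ x i] =
    ~~ x j && [forall i, (i \notin codom f') ==> ~~ [ffun k => x (lift j k)] i].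
  apply/forallP/andP => [h|[xj h] i].
    split; first by have := h j; rewrite hj.
    by apply/forallP => k; rewrite ffunE -codom_lift; apply: h.
  apply/implyP; case: (unliftP j i) => [k -> hk|-> //].
  by have := forallP h k; rewrite ffunE -codom_lift hk; apply.
by case: (x j).
Qed.

Lemma embed_ind n (phi : qstate n) (P : forall N, qstate N -> Prop) :
  P n phi -> (forall N (j : 'I_N.+1) (w : qstate N), P N w -> P N.+1 (insert0 j w)) ->
  forall N (f : 'I_n -> 'I_N), (n <= N)%N -> {homo f : i j / (i < j)%N} ->
  P N (embed f phi).
Proof.
move=> Pphi Pinsert; elim=> [|M IH] f nN hf.
  by move: f hf; rewrite leqn0 in nN; move/eqP: nN => n0; subst n => f hf; rewrite embed_id.
have [eM|neM] := eqVneq n M.+1; first by subst n; rewrite embed_id.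
have nM : (n <= M)%N by rewrite -ltnS ltn_neqAle neM.
have [j hj] := exists_notin_codom f (nM : (n < M.+1)%N).
have [f' hf' ff'] := homo_ltn_factor_lift hf hj.
by rewrite (embed_lift phi hj ff'); apply/Pinsert/IH.
Qed.

Lemma sqnorm_embed N n (f : 'I_n -> 'I_N) (phi : qstate n) :
  (n <= N)%N -> {homo f : i j / (i < j)%N} -> sqnorm (embed f phi) = sqnorm phi.
Proof.
apply: (embed_ind (P := fun N w => sqnorm w = sqnorm phi)) => // M j w <-.
exact: sqnorm_insert0.
Qed.

Section Monotone.
Variable E : forall n, qstate n -> R.
Hypothesis E_typeI : typeI E.
Hypothesis E_zero_invariant : zero_invariant E.

Lemma typeI_phase_le n (u : C) (w : qstate n.+1) :
  `|u| = 1 -> sqnorm w = 1 -> E (scalev u w) <= E w.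
Proof.
move=> hu hw.
have hp : valid (Measure ord0 (fun _ : 'I_1 => phase_op u) (fun _ => Stop R n.+1)).
  by split=> //; apply: phase_op_complete.
have := E_typeI hp hw; rewrite /= big_flatten /= big_map big_enum /= big_ord1.
rewrite big_mkcond big_seq1 apply1_phase_op sqnorm_scalev_unit //.
by rewrite oner_eq0 /= normalize_id ?sqnorm_scalev_unit // mul1r.
Qed.

(* A phase needs a qubit to act on: insert a |0> qubit first. *)
Lemma typeI_phase n (u : C) (w : qstate n) :
  `|u| = 1 -> sqnorm w = 1 -> E (scalev u w) = E w.
Proof.
move=> hu hw; have huw := sqnorm_scalev_unit hu hw.
rewrite -(E_zero_invariant ord0 hw) -(E_zero_invariant ord0 huw) insert0_scalev.
set W := insert0 ord0 w; have hW : sqnorm W = 1 by rewrite sqnorm_insert0.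
apply/le_anti; rewrite typeI_phase_le //=.
have {1}-> : W = scalev u^* (scalev u W).
  by apply/ffunP => x; rewrite !ffunE mulrA -normCKC hu expr1n mul1r.
by rewrite typeI_phase_le ?norm_conjC ?sqnorm_scalev_unit.
Qed.

Lemma typeI_embed N n (f : 'I_n -> 'I_N) (phi : qstate n) :
  (n <= N)%N -> {homo f : i j / (i < j)%N} -> sqnorm phi = 1 ->
  E (embed f phi) = E phi.
Proof.
move=> nN hf hphi.
apply: (embed_ind (P := fun N w => sqnorm w = 1 -> E w = E phi)) => //.
  by move=> M j w IH hw; rewrite sqnorm_insert0 in hw; rewrite E_zero_invariant // IH.
by rewrite sqnorm_embed.
Qed.

Lemma typeI_scalar_branches N (p : protocol R N) (psi T : qstate N) :
  valid p -> sqnorm psi = 1 -> sqnorm T = 1 ->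
  (forall v, v \in run p psi -> exists c : C, forall x, v x = c * T x) ->
  \sum_(v <- run p psi | sqnorm v != 0) complex.Re (sqnorm v) * E (normalize v)
  = E T.
Proof.
move=> hp hpsi hT hrun.
rewrite big_mkcond [LHS]big_seq.
transitivity (\sum_(v <- run p psi | v \in run p psi) complex.Re (sqnorm v) * E T).
  apply: eq_bigr => v /hrun[c hc].
  have -> : v = scalev c T by apply/ffunP => x; rewrite ffunE hc.
  rewrite sqnorm_scalev hT mulr1 sqrf_eq0 normr_eq0.
  have [->|c0] := eqVneq c 0; first by rewrite normr0 expr0n /= mul0r.
  by rewrite /= normalize_scalev // typeI_phase // normf_div normr_id divff ?normr_eq0.
by rewrite -big_seq -mulr_suml -Re_sum run_sqnorm // hpsi mul1r.
Qed.

End Monotone.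
End Qubits.

Theorem theorem2 (R : rcfType) (E : forall n : nat, qstate R n -> R) :
  typeI E -> zero_invariant E -> typeII E.
Proof.
move=> EI EZ N n psi phi hpsi hphi [nN [f [hf [p [hp hrun]]]]].
have hT : sqnorm (embed f phi) = 1 by rewrite sqnorm_embed.
rewrite -(typeI_embed EZ nN hf hphi) -(typeI_scalar_branches EI EZ hp hpsi hT hrun).
exact: EI.
Qed.
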